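(* Let $\Gamma$ be a connected signed graph on $N$ vertices and $t^*\in\mathbb{R}$. The dimension of the kernel of $\mathcal{L}(\Gamma(t^* ))$ restricted to $\mathbf{1}^\perp=\{v\in\mathbb{R}^N:\sum_iv_i=0\}$ equals the multiplicity of $t^*$ as a root of the polynomial $t\mapsto \mathcal{M}(\Gamma(t))$.
   Context: A signed graph $\Gamma$ is a finite simple undirected graph with vertex set $\{1,\dots,N\}$ in which every edge $\{i,j\}$ carries a nonzero real weight $\gamma_{ij}$, which may be of either sign. For real $t$, $\Gamma(t)$ is the weighted graph with the same edges and weights $\gamma_{ij}(t)=\gamma_{ij}$ if $\gamma_{ij}>0$ and $\gamma_{ij}(t)=t\gamma_{ij}$ if $\gamma_{ij}<0$. For a weighted graph $H$ with weights $w_{ij}$, its Laplacian $\mathcal{L}(H)$ has off-diagonal entries $w_{ij}$ (zero for non-edges) and diagonal entries $-\sum_{k\neq i}w_{ik}$, and $\mathcal{M}(H)=\sum_T\prod_{e\in E(T)}w(e)$ summed over spanning trees $T$ of $H$; equivalently $\mathcal{M}(H)=\frac{(-1)^{n-1}}{n}\prod_{i=2}^n\lambda_i$ where $n=|V(H)|$ and $\lambda_1=0,\lambda_2,\dots,\lambda_n$ are the eigenvalues of $\mathcal{L}(H)$. *)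

From HB Require Import structures.
From mathcomp Require Import all_boot all_order all_algebra.
Set Implicit Arguments. Unset Strict Implicit. Unset Printing Implicit Defensive.
Import Order.TTheory GRing.Theory Num.Theory.
Local Open Scope ring_scope.

(* A signed graph on vertex set 'I_N is given by a symmetric weight matrix
   gamma with zero diagonal; {i,j} is an edge iff gamma i j != 0, and then
   gamma i j is its (nonzero) weight. *)
Definition signed_graph (R : numDomainType) (N : nat) (gamma : 'M[R]_N) : Prop :=
  (forall i j, gamma i j = gamma j i) /\ (forall i, gamma i i = 0).

Definition sg_adj (R : numDomainType) (N : nat) (gamma : 'M[R]_N) : rel 'I_N :=
  fun i j => gamma i j != 0.

Definition sg_connected (R : numDomainType) (N : nat) (gamma : 'M[R]_N) : Prop :=
  forall i j : 'I_N, connect (sg_adj gamma) i j.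

Definition gamma_t (R : numDomainType) (N : nat) (gamma : 'M[R]_N) (t : R)
  : 'I_N -> 'I_N -> R :=
  fun i j => if 0 < gamma i j then gamma i j else t * gamma i j.

Definition laplacian (R : pzRingType) (N : nat) (w : 'I_N -> 'I_N -> R) : 'M[R]_N :=
  \matrix_(i, j) (if i == j then - \sum_(k < N | k != i) w i k else w i j).

Definition spanning_tree (N : nat) (E : rel 'I_N) (T : {set 'I_N * 'I_N}) : bool :=
  [forall e in T, (e.1 < e.2)%N && E e.1 e.2]
  && [forall i, forall j,
        connect (fun x y => ((x, y) \in T) || ((y, x) \in T)) i j]
  && (#|T| == N.-1)%N.

Definition tree_sum (S : comNzRingType) (N : nat) (E : rel 'I_N)
  (w : 'I_N -> 'I_N -> S) : S :=
  \sum_(T : {set 'I_N * 'I_N} | spanning_tree E T) \prod_(e in T) w e.1 e.2.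

Definition M_Gamma (R : realFieldType) (N : nat) (gamma : 'M[R]_N) (t : R) : R :=
  tree_sum (sg_adj gamma) (gamma_t gamma t).

Definition M_Gamma_poly (R : realFieldType) (N : nat) (gamma : 'M[R]_N) : {poly R} :=
  tree_sum (sg_adj gamma)
    (fun i j => if 0 < gamma i j then (gamma i j)%:P else gamma i j *: 'X).

Lemma M_Gamma_polyE (R : realFieldType) (N : nat) (gamma : 'M[R]_N) (t : R) :
  (M_Gamma_poly gamma).[t] = M_Gamma gamma t.
Proof.
rewrite /M_Gamma_poly /M_Gamma /tree_sum horner_sum; apply: eq_bigr => T _.
rewrite horner_prod; apply: eq_bigr => e _; rewrite /gamma_t.
by case: ifP => _; rewrite ?hornerC // hornerZ hornerX mulrC.
Qed.

(* dimension of ker L restricted to 1^perp = {v | sum_i v_i = 0}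
   (vectors represented as rows; L v = 0 iff v^T L^T = 0) *)
Definition ker_dim_on_ones_perp (R : fieldType) (N : nat) (L : 'M[R]_N) : nat :=
  \rank (kermx L^T :&: kermx (const_mx 1 : 'M[R]_(N, 1)))%MS.

From HB Require Import structures.
From mathcomp Require Import all_boot all_order all_algebra all_fingroup.
From mathcomp Require Import ring.
Set Implicit Arguments. Unset Strict Implicit. Unset Printing Implicit Defensive.
Import Order.TTheory GRing.Theory Num.Theory.
Local Open Scope ring_scope.

(* Write L(t) for the Laplacian of Gamma(t), split it as L(t) = L+ + t L-
   along the positive and negative weights, and let s = t*.  By the
   matrix-tree theorem M(Gamma(t)) is, up to sign, the determinant of the
   principal minor L0(t) of L(t) at the first vertex, and
   L0(t) = L0(s) + (t - s) L0-.  For a symmetric C and a B whose quadratic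
   form is definite on ker C, det (C + (t - s) B) vanishes at s to order
   exactly dim ker C.  This applies to C = L0(s) and B = L0-: if v kills L0(s)
   and v L0- v^T = 0, then v extended by 0 at the first vertex makes the
   semidefinite forms of L+ and -L- both vanish, so it is constant along
   every edge, hence zero by connectivity.  Finally, as the rows of the
   symmetric L(s) sum to zero, subtracting the first coordinate identifies
   ker L(s) on 1^perp with ker L0(s). *)

Lemma sum_delta_l (S : nzRingType) m (a : 'I_m) (g : 'I_m -> S) :
  \sum_j (a == j)%:R * g j = g a.
Proof.
rewrite (bigD1 a) //= eqxx mul1r big1 ?addr0 // => j /negbTE.
by rewrite eq_sym => ->; rewrite mul0r.
Qed.

Lemma sum_delta_r (S : nzRingType) m (a : 'I_m) (g : 'I_m -> S) :
  \sum_j (j == a)%:R * g j = g a.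
Proof. by under eq_bigr => j _ do rewrite eq_sym; rewrite sum_delta_l. Qed.

Lemma lift0_eq0 m (i : 'I_m) : (lift ord0 i == ord0) = false.
Proof. by rewrite eq_sym (negbTE (neq_lift _ _)). Qed.

Lemma eq0_lift0 m (i : 'I_m) : (ord0 == lift ord0 i) = false.
Proof. by rewrite (negbTE (neq_lift _ _)). Qed.

Section Arborescence.
Variable n : nat.
Implicit Types (f g : 'I_n -> 'I_n.+1).

(* [f] gives the parent [f i] of each non-root vertex [lift ord0 i]; it
   encodes an arborescence rooted at [ord0] when following parents always
   leads to the root. *)
Definition parent f (x : 'I_n.+1) : 'I_n.+1 :=
  if unlift ord0 x is Some i then f i else ord0.

Definition arborescence f := [forall x, fconnect (parent f) x ord0].

Lemma parent_root f : parent f ord0 = ord0.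
Proof. by rewrite /parent unlift_none. Qed.

Lemma parent_lift f i : parent f (lift ord0 i) = f i.
Proof. by rewrite /parent liftK. Qed.

Lemma arborescence_parent_closed f (Q : 'I_n.+1 -> Prop) : arborescence f ->
  (forall z, Q z -> z != ord0 /\ Q (parent f z)) -> forall z, ~ Q z.
Proof.
move=> /forallP toroot Qclosed z Qz; have := iter_findex (toroot z).
set m := findex _ _ _.
have Qm : Q (iter m (parent f) z).
  by elim: m => [|m IH] //=; case: (Qclosed _ IH).
by move=> Em; rewrite Em in Qm; case: (Qclosed _ Qm) => /eqP.
Qed.

Lemma fconnect_parent f x : x != ord0 ->
  fconnect (parent f) x ord0 = fconnect (parent f) (parent f x) ord0.
Proof.
move=> x0; apply/idP/idP => [xroot|]; last exact: connect_trans (fconnect1 _ x).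
have := iter_findex xroot; case: (findex _ _ _) => [/= x_eq0|m].
  by rewrite x_eq0 eqxx in x0.
by rewrite iterSr => <-; apply: fconnect_iter.
Qed.

Lemma arborescence_parent_neq f i : arborescence f -> f i != lift ord0 i.
Proof.
move=> arb; apply/negP => /eqP fi.
apply: (arborescence_parent_closed (Q := fun z => z = lift ord0 i) arb) (erefl _).
by move=> z ->; rewrite lift0_eq0 parent_lift fi.
Qed.

Lemma arborescence_no_2cycle f i : arborescence f -> parent f (f i) != lift ord0 i.
Proof.
move=> arb; apply/negP => /eqP ffi.
have fi0 : f i != ord0.
  by apply/eqP => fi0; move: ffi; rewrite fi0 parent_root => /eqP; rewrite eq0_lift0.
apply: (arborescence_parent_closed (Q := fun z => z = lift ord0 i \/ z = f i) arb)
  (or_introl erefl).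
move=> z [->|->]; first by rewrite lift0_eq0 parent_lift; auto.
by rewrite ffi; auto.
Qed.

Definition parent_mx (S : nzRingType) f : 'M[S]_n :=
  \matrix_(i, j) ((f i == lift ord0 j)%:R - (i == j)%:R).

Section ParentMatrix.
Variable S : comNzRingType.

(* Only the identity permutation contributes to the determinant: a
   permutation [s] moving [i] picks the entry [f i == lift ord0 (s i)], and
   following [s] from [i] would then be an endless walk along parents. *)
Lemma det_parent_mx_arborescence f :
  arborescence f -> \det (parent_mx S f) = (-1) ^+ n.
Proof.
move=> arb; rewrite /determinant (bigD1 (1%g : 'S_n)) //= [X in _ + X]big1.
  rewrite odd_perm1 mul1r addr0 (eq_bigr (fun _ => -1)) ?prodr_const ?card_ord //.
  by move=> i _; rewrite mxE perm1 eqxx (negbTE (arborescence_parent_neq _ arb)) sub0r.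
move=> s s_neq1.
have [/existsP [i /andP [si fi]]|s_parent] :=
  boolP [exists i, (s i != i) && (f i != lift ord0 (s i))].
  by rewrite (bigD1 i) //= mxE (negbTE fi) eq_sym (negbTE si) subrr mul0r mulr0.
have [i0 si0] : exists i, s i != i.
  apply/existsP; apply: contraNT s_neq1 => /existsPn s_fix.
  by apply/eqP/permP => x; rewrite perm1; apply/eqP; move: (s_fix x); rewrite negbK.
exfalso; apply: (arborescence_parent_closed
  (Q := fun z => exists j, z = lift ord0 j /\ s j != j) arb) (ex_intro _ i0 (conj erefl si0)).
move=> z [j [-> sj]]; split; first by rewrite lift0_eq0.
exists (s j); split; last by apply: contra sj => /eqP /perm_inj ->.
by move/existsPn: s_parent => /(_ j); rewrite sj negbK parent_lift => /eqP.
Qed.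

(* The indicator of the vertices that do not reach the root is a nonzero
   kernel vector. *)
Lemma det_parent_mx_cycle f : ~~ arborescence f -> \det (parent_mx S f) = 0.
Proof.
move=> /forallPn [x x_stuck].
pose v (y : 'I_n.+1) : S := (~~ fconnect (parent f) y ord0)%:R.
have v0 : v ord0 = 0 by rewrite /v connect0.
have [j0 xj0|x0] := unliftP ord0 x; last by rewrite x0 connect0 in x_stuck.
pose c : 'cV[S]_n := \col_j v (lift ord0 j).
have kerc : parent_mx S f *m c = 0.
  apply/matrixP => i k; rewrite !mxE.
  under eq_bigr => j _ do rewrite !mxE mulrBl.
  rewrite sumrB sum_delta_l.
  have -> : \sum_j (f i == lift ord0 j)%:R * v (lift ord0 j) = v (f i).
    case: (unliftP ord0 (f i)) => [j' ->|->].
      under eq_bigr => j _ do rewrite (inj_eq (@lift_inj _ ord0)).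
      by rewrite sum_delta_l.
    by rewrite v0 big1 // => j _; rewrite eq0_lift0 mul0r.
  by rewrite /v -parent_lift -fconnect_parent ?subrr ?lift0_eq0.
have := mul_adj_mx (parent_mx S f); move/(congr1 (fun M => M *m c)).
rewrite -mulmxA kerc mulmx0 mul_scalar_mx => /matrixP /(_ j0 0).
by rewrite !mxE /v -xj0 x_stuck mulr1.
Qed.

Lemma det_parent_mx f :
  \det (parent_mx S f) = if arborescence f then (-1) ^+ n else 0.
Proof.
case: ifP => arb; first exact: det_parent_mx_arborescence.
by apply: det_parent_mx_cycle; rewrite arb.
Qed.

End ParentMatrix.
End Arborescence.

Local Notation minor0 A := (row' ord0 (col' ord0 A)).

Lemma minor0_laplacian (S : comNzRingType) n (w : 'I_n.+1 -> 'I_n.+1 -> S) :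
  minor0 (laplacian w) =
  \matrix_(i, j) \sum_k w (lift ord0 i) k * ((k == lift ord0 j)%:R - (i == j)%:R).
Proof.
apply/matrixP => i j; rewrite !mxE (inj_eq (@lift_inj _ ord0)).
under [RHS]eq_bigr => k _ do rewrite mulrBr.
rewrite sumrB.
under [X in X - _]eq_bigr => k _ do rewrite mulrC eq_sym.
rewrite sum_delta_l; case: eqP => [->|_].
  under [X in _ - X]eq_bigr => k _ do rewrite mulr1.
  by rewrite [in RHS](bigD1 (lift ord0 j)) //= opprD addrA subrr sub0r.
by rewrite big1 ?subr0 // => k _; rewrite mulr0.
Qed.

(* By [minor0_laplacian], row [i] of the minor is
   [\sum_k w (lift ord0 i) k] times the row obtained by choosing [k] as the
   parent of [lift ord0 i]; expanding by multilinearity leaves one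
   [det_parent_mx] per parent map. *)
Theorem det_minor0_laplacian (S : comNzRingType) n (w : 'I_n.+1 -> 'I_n.+1 -> S) :
  \det (minor0 (laplacian w)) = (-1) ^+ n *
    \sum_(f : {ffun 'I_n -> 'I_n.+1} | arborescence f) \prod_i w (lift ord0 i) (f i).
Proof.
rewrite minor0_laplacian /determinant.
under eq_bigr => s _.
  rewrite (eq_bigr (fun i => \sum_k w (lift ord0 i) k *
     ((k == lift ord0 (s i))%:R - (i == s i)%:R))); last by move=> i _; rewrite mxE.
  rewrite bigA_distr_bigA mulr_sumr.
  over.
rewrite exchange_big /= [in RHS]big_mkcond [in RHS]mulr_sumr; apply: eq_bigr => f _.
have -> : \sum_(s : 'S_n) (-1) ^+ s * \prod_i (w (lift ord0 i) (f i) *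
     ((f i == lift ord0 (s i))%:R - (i == s i)%:R))
   = (\prod_i w (lift ord0 i) (f i)) * \det (parent_mx S f).
  rewrite /determinant mulr_sumr; apply: eq_bigr => s _.
  rewrite big_split /= mulrCA; congr (_ * (_ * _)).
  by apply: eq_bigr => i _; rewrite mxE.
by rewrite det_parent_mx; case: ifP => _; rewrite ?mulr0 // mulrC.
Qed.

Section SpanningTrees.
Variable n : nat.
Implicit Types f g : {ffun 'I_n -> 'I_n.+1}.

Definition tree_edge (x y : 'I_n.+1) : 'I_n.+1 * 'I_n.+1 :=
  if (x < y)%N then (x, y) else (y, x).

Definition tree_of f : {set 'I_n.+1 * 'I_n.+1} :=
  [set tree_edge (lift ord0 i) (f i) | i : 'I_n].

Lemma tree_edge_eq a b c d : tree_edge a b = tree_edge c d ->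
  (a = c /\ b = d) \/ (a = d /\ b = c).
Proof. by rewrite /tree_edge; do 2 case: ifP => _; case=> -> ->; auto. Qed.

Lemma tree_edge_inj f :
  arborescence f -> injective (fun i => tree_edge (lift ord0 i) (f i)).
Proof.
move=> arb i j /tree_edge_eq [[/lift_inj //]|[fj fi]].
by have := arborescence_no_2cycle j arb; rewrite -fj parent_lift fi eqxx.
Qed.

(* Two parent maps with the same edges agree: at a vertex where they differ,
   the edge to its [f]-parent must be the [g]-edge of that parent, and the
   disagreement moves up one step, which is impossible in an arborescence. *)
Lemma tree_of_inj f g : arborescence f -> arborescence g -> tree_of f = tree_of g -> f = g.
Proof.
move=> arbf arbg eq_fg; apply/ffunP => i0; apply/eqP/negPn/negP => ne0.
have Q0 : lift ord0 i0 != ord0 /\ parent f (lift ord0 i0) != parent g (lift ord0 i0).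
  by rewrite !parent_lift lift0_eq0.
apply: (arborescence_parent_closed
  (Q := fun z => z != ord0 /\ parent f z != parent g z) arbf _ Q0).
move=> z [z0 neq_z]; split => //.
case: (unliftP ord0 z) => [i zi|z_eq0]; last by rewrite z_eq0 eqxx in z0.
have : tree_edge (lift ord0 i) (f i) \in tree_of g by rewrite -eq_fg; apply: imset_f.
case/imsetP => j _ /tree_edge_eq [[/lift_inj ij fij]|[ij fij]].
  by move: neq_z; rewrite zi !parent_lift fij ij eqxx.
rewrite zi parent_lift fij !parent_lift lift0_eq0 -ij; split => //.
apply/negP => /eqP fj.
by have := arborescence_no_2cycle i arbf; rewrite fij parent_lift fj eqxx.
Qed.

Variable E : rel 'I_n.+1.
Hypothesis E_sym : symmetric E.

Definition arborescence_in f := arborescence f && [forall i, E (lift ord0 i) (f i)].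

Definition tree_rel (T : {set 'I_n.+1 * 'I_n.+1}) : rel 'I_n.+1 :=
  fun x y => ((x, y) \in T) || ((y, x) \in T).

Lemma tree_rel_sym T : symmetric (tree_rel T).
Proof. by move=> x y; rewrite /tree_rel orbC. Qed.

Lemma tree_of_spanning f : arborescence_in f -> spanning_tree E (tree_of f).
Proof.
case/andP => arb /forallP f_edge; apply/andP; split; first (apply/andP; split).
- apply/forallP => e; apply/implyP => /imsetP [i _ ->].
  have fi := arborescence_parent_neq i arb; rewrite /tree_edge.
  case: ifP => lt /=; first by rewrite lt f_edge.
  rewrite E_sym f_edge andbT ltn_neqAle leqNgt lt andbT.
  by apply: contra fi => /eqP fi; apply/eqP/val_inj.
- have to_parent z : connect (tree_rel (tree_of f)) z (parent f z).
    case: (unliftP ord0 z) => [i ->|->]; last by rewrite parent_root connect0.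
    apply: connect1; rewrite parent_lift /tree_rel.
    have : tree_edge (lift ord0 i) (f i) \in tree_of f by apply: imset_f.
    by rewrite /tree_edge; case: ifP => _ ->; rewrite ?orbT.
  have to_root x : connect (tree_rel (tree_of f)) x ord0.
    move/forallP: arb => /(_ x) /iter_findex <-.
    elim: (findex _ _ _) => [|m IH] /=; first exact: connect0.
    exact: connect_trans IH (to_parent _).
  apply/forallP => x; apply/forallP => y; apply: connect_trans (to_root x) _.
  by rewrite (sym_connect_sym (@tree_rel_sym _)) to_root.
- by rewrite card_imset ?card_ord //; apply: tree_edge_inj.
Qed.

(* [d x] is the length of a shortest path from [x] to the root. *)
Lemma spanning_tree_descent T : spanning_tree E T ->
  exists d : 'I_n.+1 -> nat,
    forall x, x != ord0 -> exists y, tree_rel T x y && (d y < d x)%N.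
Proof.
case/andP => /andP [_ /forallP T_conn] _.
have path_to_root x : exists m, [exists p : m.-tuple 'I_n.+1,
    path (tree_rel T) x p && (last x p == ord0)].
  have /connectP [p pp lp] := forallP (T_conn x) ord0.
  by exists (size p); apply/existsP; exists (in_tuple p); rewrite /= pp -lp eqxx.
exists (fun x => ex_minn (path_to_root x)) => x x0.
case: ex_minnP => m /existsP [p /andP [pp lp]] m_min.
case: p pp lp => [[|y p] /= /eqP size_p] pp lp; first by rewrite lp in x0.
case/andP: pp => xy pp; exists y; rewrite xy /=.
case: ex_minnP => m' _ /(_ (size p)) m'_min.
have : (m' <= size p)%N.
  by apply: m'_min; apply/existsP; exists (in_tuple p); rewrite /= pp lp.
by move/leq_ltn_trans; apply; rewrite -size_p.
Qed.

Lemma spanning_tree_of T : spanning_tree E T -> exists2 f, arborescence_in f & tree_of f = T.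
Proof.
move=> spanT; have [d d_desc] := spanning_tree_descent spanT.
case/andP: spanT => /andP [/forallP T_edges _] /eqP card_T.
have T_edge x y : (x, y) \in T -> (x < y)%N && E x y.
  by move=> xyT; move/implyP: (T_edges (x, y)); apply.
pose f := [ffun i => odflt ord0 [pick y | tree_rel T (lift ord0 i) y &&
                                          (d y < d (lift ord0 i))%N]].
have fP i : tree_rel T (lift ord0 i) (f i) && (d (f i) < d (lift ord0 i))%N.
  rewrite /f ffunE; case: pickP => [y -> //|no_y].
  have [y /andP [y1 y2]] := d_desc (lift ord0 i) (negbT (lift0_eq0 i)).
  by move: (no_y y); rewrite y1 y2.
have arb : arborescence f.
  suff to_root k x : (d x < k)%N -> fconnect (parent f) x ord0.
    by apply/forallP => x; apply: (to_root (d x).+1).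
  elim: k x => [//|k IH] x; case: (unliftP ord0 x) => [i ->|->]; last by rewrite connect0.
  move=> dk; rewrite fconnect_parent ?parent_lift ?lift0_eq0 //.
  by apply: IH; case/andP: (fP i) => _ /leq_trans; apply; rewrite -ltnS.
have f_edge i : E (lift ord0 i) (f i).
  case/andP: (fP i) => /orP [/T_edge /andP [_ //]|/T_edge /andP [_ e]] _.
  by rewrite E_sym.
exists f; first by rewrite /arborescence_in arb; apply/forallP.
apply/eqP; rewrite eqEcard card_T card_imset ?card_ord ?leqnn ?andbT;
  last exact: tree_edge_inj.
apply/subsetP => e /imsetP [i _ ->]; rewrite /tree_edge.
case/andP: (fP i) => /orP [e_in|e_in] _; first by case/andP: (T_edge _ _ e_in) => ->.
by case/andP: (T_edge _ _ e_in) => lt _; rewrite ltnNge (ltnW lt).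
Qed.

Lemma tree_sum_arborescence (S : comNzRingType) (w : 'I_n.+1 -> 'I_n.+1 -> S) :
  (forall x y, w x y = w y x) -> (forall x y, ~~ E x y -> w x y = 0) ->
  tree_sum E w = \sum_(f : {ffun 'I_n -> 'I_n.+1} | arborescence f)
                   \prod_i w (lift ord0 i) (f i).
Proof.
move=> w_sym w0.
have -> : \sum_(f : {ffun 'I_n -> 'I_n.+1} | arborescence f) \prod_i w (lift ord0 i) (f i)
   = \sum_(f in [set f | arborescence_in f]) \prod_i w (lift ord0 i) (f i).
  rewrite [RHS]big_mkcond [LHS]big_mkcond; apply: eq_bigr => f _.
  rewrite inE /arborescence_in; case: (arborescence f) => //=.
  case: forallP => // /forallP /forallPn [i not_edge].
  by rewrite (bigD1 i) //= w0 // mul0r.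
have -> : tree_sum E w =
          \sum_(T in tree_of @: [set f | arborescence_in f]) \prod_(e in T) w e.1 e.2.
  apply: eq_bigl => T; apply/idP/idP.
    by case/spanning_tree_of => f f_arb <-; apply: imset_f; rewrite inE.
  by case/imsetP => f; rewrite inE => f_arb ->; apply: tree_of_spanning.
rewrite big_imset /=; last first.
  by move=> f g; rewrite !inE => /andP [arbf _] /andP [arbg _]; apply: tree_of_inj.
apply: eq_bigr => f; rewrite inE => /andP [arb _].
rewrite big_imset /=; last by move=> i j _ _; apply: tree_edge_inj.
by apply: eq_bigr => i _; rewrite /tree_edge; case: ifP.
Qed.

End SpanningTrees.

Section LaplacianAlgebra.
Variables (S : comNzRingType) (m : nat).
Implicit Types a b : 'I_m -> 'I_m -> S.

Lemma eq_laplacian a b : a =2 b -> laplacian a = laplacian b.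
Proof.
move=> ab; apply/matrixP => i j; rewrite !mxE ab.
by under eq_bigr => k _ do rewrite ab.
Qed.

Lemma laplacianD a b : laplacian (fun i j => a i j + b i j) = laplacian a + laplacian b.
Proof. by apply/matrixP => i j; rewrite !mxE; case: ifP; rewrite ?big_split ?opprD. Qed.

Lemma laplacianZ c a : laplacian (fun i j => c * a i j) = c *: laplacian a.
Proof. by apply/matrixP => i j; rewrite !mxE; case: ifP; rewrite -?mulr_sumr ?mulrN. Qed.

Lemma trmx_laplacian a : (forall i j, a i j = a j i) -> (laplacian a)^T = laplacian a.
Proof. by move=> a_sym; apply/matrixP => i j; rewrite !mxE eq_sym; case: eqP => [->|]. Qed.

Lemma laplacian_row_sum a i : \sum_j laplacian a i j = 0.
Proof.
rewrite (bigD1 i) //= !mxE eqxx.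
by under eq_bigr => j ji do rewrite !mxE eq_sym (negbTE ji); rewrite addNr.
Qed.

Lemma laplacianE a i j : laplacian a i j = a i j - (i == j)%:R * \sum_k a i k.
Proof.
rewrite mxE; case: eqP => [->|_]; last by rewrite mul0r subr0.
by rewrite mul1r [in RHS](bigD1 j) //= opprD addrA subrr sub0r.
Qed.

Lemma laplacian_quad a (u : 'rV[S]_m) : (forall i j, a i j = a j i) ->
  (u *m laplacian a *m u^T) 0 0 *+ 2 = - \sum_i \sum_j a i j * (u 0 i - u 0 j) ^+ 2.
Proof.
move=> a_sym.
pose X := \sum_i \sum_j a i j * (u 0 i ^+ 2 - u 0 i * u 0 j).
have -> : (u *m laplacian a *m u^T) 0 0 = - X.
  rewrite mxE; under eq_bigr => j _ do rewrite !mxE mulr_suml.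
  rewrite exchange_big /X -sumrN; apply: eq_bigr => i _.
  have entry j : u 0 i * laplacian a i j * u 0 j =
      u 0 i * a i j * u 0 j - (i == j)%:R * ((\sum_k a i k) * u 0 i * u 0 j).
    by rewrite laplacianE; ring.
  under eq_bigr => j _ do rewrite entry.
  by rewrite sumrB sum_delta_l !mulr_suml -sumrB -sumrN; apply: eq_bigr => j _; ring.
have X_swap : X = \sum_i \sum_j a i j * (u 0 j ^+ 2 - u 0 i * u 0 j).
  rewrite /X exchange_big /=; apply: eq_bigr => i _; apply: eq_bigr => j _.
  by rewrite (a_sym j i); ring.
have -> : \sum_i \sum_j a i j * (u 0 i - u 0 j) ^+ 2 = X + X.
  rewrite {2}X_swap /X -big_split /=; apply: eq_bigr => i _.
  by rewrite -big_split /=; apply: eq_bigr => j _; ring.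
by rewrite mulr2n opprD.
Qed.

End LaplacianAlgebra.

Lemma map_laplacian (R S : comNzRingType) m (f : {rmorphism R -> S})
    (a : 'I_m -> 'I_m -> R) :
  map_mx f (laplacian a) = laplacian (fun i j => f (a i j)).
Proof. by apply/matrixP => i j; rewrite !mxE; case: ifP; rewrite ?rmorphN ?rmorph_sum. Qed.

Lemma laplacian_quad_eq0 (R : realFieldType) m (a : 'I_m -> 'I_m -> R) (u : 'rV[R]_m) :
  (forall i j, a i j = a j i) -> (forall i j, 0 <= a i j) ->
  u *m laplacian a *m u^T = 0 -> forall i j, a i j != 0 -> u 0 i = u 0 j.
Proof.
move=> a_sym a_ge0 quad0 i j aij.
have term_ge0 i' j' : 0 <= a i' j' * (u 0 i' - u 0 j') ^+ 2 by rewrite mulr_ge0 ?sqr_ge0.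
have sum0 : \sum_i \sum_j a i j * (u 0 i - u 0 j) ^+ 2 = 0.
  by apply/eqP; rewrite -oppr_eq0 -laplacian_quad // quad0 mxE mul0rn.
have row0 : \sum_j a i j * (u 0 i - u 0 j) ^+ 2 = 0.
  by move: sum0; move/psumr_eq0P; apply=> // i' _; apply: sumr_ge0.
have /eqP : a i j * (u 0 i - u 0 j) ^+ 2 = 0 by move: row0; move/psumr_eq0P; apply.
by rewrite mulf_eq0 (negbTE aij) sqrf_eq0 subr_eq0 => /eqP.
Qed.

Definition root_embed {S : nzRingType} {n : nat} : 'M[S]_(n, n.+1) :=
  \matrix_(i, j) (lift ord0 i == j)%:R.

Lemma minor0E (S : nzRingType) n (A : 'M[S]_n.+1) :
  minor0 A = root_embed *m A *m root_embed^T.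
Proof.
have -> : root_embed *m A = \matrix_(i, k) A (lift ord0 i) k.
  apply/matrixP => i k; rewrite !mxE.
  by under eq_bigr => l _ do rewrite !mxE; rewrite sum_delta_l.
apply/matrixP => i j; rewrite !mxE.
by under eq_bigr => k _ do rewrite !mxE mulr_natr -mulr_natl; rewrite sum_delta_l.
Qed.

Lemma trmx_minor0 (S : comNzRingType) n (A : 'M[S]_n.+1) : (minor0 A)^T = minor0 A^T.
Proof. by rewrite !minor0E !trmx_mul trmxK mulmxA. Qed.

Lemma mxrank_retract (F : fieldType) m1 m2 n1 n2
    (A : 'M[F]_(m1, n1)) (B : 'M[F]_(m2, n2)) X Y :
  (A *m X <= B)%MS -> A *m X *m Y = A -> (\rank A <= \rank B)%N.
Proof. by move=> AXB AXY; rewrite -{1}AXY (leq_trans (mxrankM_maxl _ _)) ?mxrankS. Qed.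

Section RootShift.
Variables (F : fieldType) (n : nat).
Hypothesis n1_neq0 : (n.+1)%:R != 0 :> F.
Local Notation ones_col := (const_mx 1 : 'M[F]_(n.+1, 1)).
Local Notation ones_row := (const_mx 1 : 'M[F]_(1, n.+1)).

Definition root_shift : 'M[F]_(n.+1, n) :=
  \matrix_(i, j) ((i == lift ord0 j)%:R - (i == ord0)%:R).

Definition center : 'M[F]_n.+1 := 1%:M - (n.+1)%:R^-1 *: (ones_col *m ones_row).

Lemma embed_shift : root_embed *m root_shift = 1%:M.
Proof.
apply/matrixP => i j; rewrite !mxE.
under eq_bigr => k _ do rewrite !mxE mulrBr.
by rewrite sumrB !sum_delta_l (inj_eq (@lift_inj _ ord0)) lift0_eq0 subr0.
Qed.

Lemma ones_row_shift : ones_row *m root_shift = 0.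
Proof.
apply/matrixP => i j; rewrite !mxE.
under eq_bigr => k _ do rewrite !mxE mul1r -[X in X - _]mulr1 -[X in _ - X]mulr1.
by rewrite sumrB !sum_delta_r subrr.
Qed.

Lemma ones_row_col : ones_row *m ones_col = (n.+1)%:R%:M.
Proof.
apply/matrixP => i j; rewrite !ord1 !mxE.
by under eq_bigr => k _ do rewrite !mxE mulr1; rewrite sumr_const card_ord mulr1n.
Qed.

Lemma center_ones_col : center *m ones_col = 0.
Proof.
rewrite mulmxBl mul1mx -scalemxAl -mulmxA ones_row_col mul_mx_scalar scalerA.
by rewrite mulVf // scale1r subrr.
Qed.

Lemma ones_row_center : ones_row *m center = 0.
Proof.
rewrite mulmxBr mulmx1 -scalemxAr mulmxA ones_row_col mul_scalar_mx scalerA.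
by rewrite mulVf // scale1r subrr.
Qed.

Lemma mulmx_center m (X : 'M_(m, n.+1)) : X *m ones_col = 0 -> X *m center = X.
Proof. by move=> X1; rewrite mulmxBr mulmx1 -scalemxAr mulmxA X1 mul0mx scaler0 subr0. Qed.

Lemma center_shift : center *m root_shift = root_shift.
Proof. by rewrite mulmxBl mul1mx -scalemxAl -mulmxA ones_row_shift mulmx0 scaler0 subr0. Qed.

(* [root_shift *m root_embed] subtracts the root coordinate from every
   coordinate; [center] then forgets that constant shift. *)
Lemma shift_embed_center m (X : 'M_(m, n.+1)) :
  X *m ones_col = 0 -> X *m root_shift *m (root_embed *m center) = X.
Proof.
pose e0 : 'M[F]_(n.+1, 1) := \matrix_(i, j) (i == ord0)%:R.
have shift_embed : root_shift *m root_embed = 1%:M - e0 *m ones_row.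
  apply/matrixP => i k; rewrite !mxE big_ord1 !mxE mulr1.
  under eq_bigr => j _ do rewrite !mxE mulrBl.
  rewrite sumrB; case: (unliftP ord0 i) => [i' ->|->].
    under eq_bigr => j _ do rewrite (inj_eq (@lift_inj _ ord0)).
    by rewrite sum_delta_l lift0_eq0 big1 ?subr0 // => j _; rewrite mul0r.
  rewrite eqxx big1 ?sub0r; last by move=> j _; rewrite eq0_lift0 mul0r.
  under eq_bigr => j _ do rewrite mul1r.
  case: (unliftP ord0 k) => [k' ->|->].
    under eq_bigr => j _ do rewrite (inj_eq (@lift_inj _ ord0)) eq_sym.
    rewrite (bigD1 k') //= eqxx big1 ?addr0 ?eq0_lift0 ?sub0r //.
    by move=> j /negbTE; rewrite eq_sym => ->.
  by rewrite big1 ?oppr0 ?subrr // => j _; rewrite lift0_eq0.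
move=> X1; rewrite !mulmxA -(mulmxA X) shift_embed (mulmxBr X) mulmx1 mulmxBl.
by rewrite mulmx_center // -!mulmxA ones_row_center !mulmx0 subr0.
Qed.

Section ZeroRowSums.
Variable L : 'M[F]_n.+1.
Hypotheses (L_sym : L^T = L) (L_row_sum : forall i, \sum_j L i j = 0).

Lemma ones_row_mulmx : ones_row *m L = 0.
Proof.
apply/matrixP => i j; rewrite !mxE.
by under eq_bigr => k _ do rewrite !mxE mul1r -{1}L_sym mxE; apply: L_row_sum.
Qed.

Lemma center_mulmx : center *m L = L.
Proof. by rewrite mulmxBl mul1mx -scalemxAl -mulmxA ones_row_mulmx mulmx0 scaler0 subr0. Qed.

Lemma embed_mulmx : root_embed *m L = minor0 L *m root_shift^T.
Proof.
apply/matrixP => i j; rewrite !mxE.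
under eq_bigr => k _ do rewrite !mxE.
rewrite sum_delta_l.
under eq_bigr => k _ do rewrite !mxE mulrBr.
rewrite sumrB; case: (unliftP ord0 j) => [j' ->|->].
  under eq_bigr => k _ do rewrite (inj_eq (@lift_inj _ ord0)) mulrC.
  by rewrite sum_delta_l big1 ?subr0 // => k _; rewrite lift0_eq0 mulr0.
rewrite big1 ?sub0r; last by move=> k _; rewrite eq0_lift0 mulr0.
under eq_bigr => k _ do rewrite eqxx mulr1.
by have := L_row_sum (lift ord0 i); rewrite big_ord_recl => /eqP; rewrite addr_eq0 => /eqP.
Qed.

Lemma shift_minor0 : root_shift *m minor0 L = L *m root_embed^T.
Proof.
by have := congr1 trmx embed_mulmx; rewrite !trmx_mul trmxK trmx_minor0 L_sym => <-.
Qed.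

Lemma rank_ker_ones_perp :
  \rank (kermx L^T :&: kermx ones_col)%MS = \rank (kermx (minor0 L)).
Proof.
set Q := (kermx L^T :&: kermx ones_col)%MS; set K := kermx (minor0 L).
have QL : Q *m L = 0 by rewrite -L_sym; apply/sub_kermxP; apply: capmxSl.
have Q1 : Q *m ones_col = 0 by apply/sub_kermxP; apply: capmxSr.
apply/eqP; rewrite eqn_leq; apply/andP; split.
  apply: (mxrank_retract (X := root_shift) (Y := root_embed *m center)).
    by apply/sub_kermxP; rewrite -mulmxA shift_minor0 mulmxA QL mul0mx.
  exact: shift_embed_center Q1.
apply: (mxrank_retract (X := root_embed *m center) (Y := root_shift)); last first.
  by rewrite -mulmxA -(mulmxA root_embed) center_shift embed_shift mulmx1.
rewrite sub_capmx; apply/andP; split; apply/sub_kermxP.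
  have KL : K *m minor0 L = 0 by apply: mulmx_ker.
  by rewrite L_sym -mulmxA -(mulmxA root_embed) center_mulmx embed_mulmx mulmxA KL mul0mx.
by rewrite -mulmxA -(mulmxA root_embed) center_ones_col !mulmx0.
Qed.

End ZeroRowSums.
End RootShift.

Section RowEbase.
Variables (F : fieldType) (m n : nat) (A : 'M[F]_(m, n)).

Lemma row_ebase_sub (i : 'I_n) : (i < \rank A)%N -> (row i (row_ebase A) <= A)%MS.
Proof.
move=> iA; have -> : row i (row_ebase A) = row (Ordinal iA) (row_base A).
  apply/rowP => j; rewrite !mxE (bigD1 i) //= big1 ?addr0; first by rewrite !mxE eqxx iA mul1r.
  move=> l li; rewrite !mxE; case: eqP => [li'|_]; last by rewrite mul0r.
  by move: li; rewrite (_ : l = i) ?eqxx //; apply: val_inj; rewrite /= -li'.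
by apply: submx_trans (row_sub _ _) _; rewrite eq_row_base.
Qed.

Lemma sub_row_ebase (v : 'rV_n) : (v <= A)%MS ->
  exists2 y : 'rV_n, v = y *m row_ebase A & forall i : 'I_n, (\rank A <= i)%N -> y 0 i = 0.
Proof.
move=> vA; have /submxP [w ->] : (v <= row_base A)%MS by rewrite eq_row_base.
exists (w *m pid_mx (\rank A)); first by rewrite mulmxA.
move=> i Ai; rewrite !mxE big1 // => l _; rewrite !mxE.
have -> : (l == i :> nat) = false.
  by apply/negbTE; rewrite neq_ltn (leq_trans (ltn_ord l) Ai).
by rewrite mulr0.
Qed.

End RowEbase.

Section Pencil.
Variables (F : fieldType) (n : nat) (C B : 'M[F]_n) (t : F).
Hypotheses (C_sym : C^T = C)
  (B_def : forall v : 'rV_n, v *m C = 0 -> v *m B *m v^T = 0 -> v = 0).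

Local Notation k := (\rank (kermx C)).
Local Notation S := (row_ebase (kermx C)).
Local Notation pencil := (map_mx polyC C + ('X - t%:P) *: map_mx polyC B).

(* In the basis given by the rows of [S], whose first [k] rows span the
   kernel of [C], the form [C] vanishes on the first [k] rows and columns. *)
Let Ct := S *m C *m S^T.
Let Bt := S *m B *m S^T.

Lemma Ct_row0 (i j : 'I_n) : (i < k)%N -> Ct i j = 0.
Proof.
move=> ik; have /sub_kermxP iC := row_ebase_sub ik.
have : row i Ct 0 j = 0 by rewrite /Ct !row_mul iC !mul0mx mxE.
by rewrite mxE.
Qed.

Lemma Ct_col0 (i j : 'I_n) : (j < k)%N -> Ct i j = 0.
Proof.
have CtT : Ct^T = Ct by rewrite /Ct !trmx_mul trmxK C_sym mulmxA.
by move=> jk; rewrite -CtT mxE Ct_row0.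
Qed.

(* After the change of basis by [S], the first [k] rows of [pencil] are
   divisible by ['X - t]; [core_pencil] is the quotient and [core] its value
   at [t]. *)
Let core : 'M[F]_n := \matrix_(i, j) if (i < k)%N then Bt i j else Ct i j.

Let core_pencil : 'M[{poly F}]_n := \matrix_(i, j)
  if (i < k)%N then (Bt i j)%:P else (Ct i j)%:P + ('X - t%:P) * (Bt i j)%:P.

Lemma det_pencil_factor :
  (\det S)%:P ^+ 2 * \det pencil = ('X - t%:P) ^+ k * \det core_pencil.
Proof.
pose d : 'rV[{poly F}]_n := \row_i (if (i < k)%N then 'X - t%:P else 1).
have conj_pencil : map_mx polyC S *m pencil *m (map_mx polyC S)^T =
    map_mx polyC Ct + ('X - t%:P) *: map_mx polyC Bt.
  by rewrite mulmxDr mulmxDl -scalemxAr -scalemxAl /Ct /Bt !map_mxM map_trmx.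
have diag_core : map_mx polyC Ct + ('X - t%:P) *: map_mx polyC Bt =
    diag_mx d *m core_pencil.
  have := Ct_row0; clearbody Ct Bt => Ct_row0'.
  apply/matrixP => i j; rewrite mul_diag_mx !mxE.
  by case: ifP => ik; rewrite ?(Ct_row0' _ _ ik) ?add0r ?mul1r.
have det_d : \det (diag_mx d) = ('X - t%:P) ^+ k.
  rewrite det_diag; under eq_bigr => i _ do rewrite mxE.
  by rewrite -big_mkcond /= (big_ord_narrow (rank_leq_row _)) prodr_const card_ord.
rewrite -det_d -det_mulmx -diag_core -conj_pencil !det_mulmx det_tr det_map_mx /=.
by rewrite expr2 mulrAC.
Qed.

Lemma Bt_head_nondegenerate (y : 'rV_n) :
  (forall i : 'I_n, (k <= i)%N -> y 0 i = 0) ->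
  (forall j : 'I_n, (j < k)%N -> (y *m Bt) 0 j = 0) -> y = 0.
Proof.
move=> y_head yBt.
have yS_ker : y *m S *m C = 0.
  apply/rowP => j; rewrite -mulmxA !mxE big1 // => i _.
  have [ik|ki] := ltnP i k; last by rewrite y_head // mul0r.
  have /sub_kermxP iC := row_ebase_sub ik.
  have : row i (S *m C) 0 j = 0 by rewrite row_mul iC mxE.
  by rewrite !mxE => ->; rewrite mulr0.
have yS_quad : y *m S *m B *m (y *m S)^T = 0.
  rewrite trmx_mul !mulmxA -(mulmxA y S B) -(mulmxA y (S *m B)).
  apply/rowP => j; rewrite ord1 mxE [RHS]mxE big1 // => i _.
  have [ik|ki] := ltnP i k; first by rewrite yBt // mul0r.
  by rewrite [y^T _ _]mxE y_head // mulr0.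
have := B_def yS_ker yS_quad => /(congr1 (fun M => M *m invmx S)).
by rewrite mulmxK ?row_ebase_unit // mul0mx.
Qed.

Lemma Ct_tail_nondegenerate (y : 'rV_n) :
  (forall i : 'I_n, (i < k)%N -> y 0 i = 0) -> y *m Ct = 0 -> y = 0.
Proof.
move=> y_tail /(congr1 (fun M => M *m invmx S^T)).
rewrite /Ct !mulmxA mulmxK ?unitmx_tr ?row_ebase_unit // mul0mx => /sub_kermxP.
move=> /sub_row_ebase [z /(congr1 (fun M => M *m invmx S))].
rewrite !mulmxK ?row_ebase_unit // => y_eq z_head.
apply/rowP => i; rewrite mxE; have [/y_tail //|ki] := ltnP i k.
by rewrite y_eq z_head.
Qed.

Lemma det_core_neq0 : \det core != 0.
Proof.
have coreE i j : core i j = if (i < k)%N then Bt i j else Ct i j by rewrite mxE.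
have := Bt_head_nondegenerate; have := Ct_tail_nondegenerate; have := Ct_col0.
clearbody core Ct Bt => Ct_col0' Ct_tail Bt_head.
apply/det0P => [[y y_neq0 y_core]].
pose y1 : 'rV_n := \row_i (if (i < k)%N then y 0 i else 0).
pose y2 : 'rV_n := \row_i (if (i < k)%N then 0 else y 0 i).
have y_split : y = y1 + y2.
  by apply/rowP => i; rewrite !mxE; case: ifP; rewrite ?addr0 ?add0r.
have y_coreE : y *m core = y1 *m Bt + y2 *m Ct.
  apply/rowP => j; rewrite !mxE -big_split; apply: eq_bigr => i _ /=.
  by rewrite coreE !mxE; case: ifP; rewrite ?mul0r ?addr0 ?add0r.
have y1_eq0 : y1 = 0.
  apply: Bt_head => [i ki|j jk]; first by rewrite mxE ltnNge ki.
  have y2Ct : (y2 *m Ct) 0 j = 0.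
    by rewrite mxE big1 // => i _; rewrite Ct_col0' // mulr0.
  have : (y1 *m Bt + y2 *m Ct) 0 j = 0 by rewrite -y_coreE y_core mxE.
  by rewrite [in X in X = _]mxE y2Ct addr0.
have y2_eq0 : y2 = 0.
  apply: Ct_tail => [i ik|]; first by rewrite mxE ik.
  by have := y_core; rewrite y_coreE y1_eq0 mul0mx add0r.
by move: y_neq0; rewrite y_split y1_eq0 y2_eq0 addr0 eqxx.
Qed.

Lemma horner_det_core_pencil : (\det core_pencil).[t] = \det core.
Proof.
rewrite -horner_evalE -det_map_mx; congr (\det _); apply/matrixP => i j.
rewrite [LHS]mxE; change (horner_eval t (core_pencil i j) = core i j).
rewrite horner_evalE !mxE; case: ifP => _; rewrite ?hornerC //.
by rewrite hornerD hornerM !hornerC hornerXsubC subrr mul0r addr0.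
Qed.

Theorem mup_det_pencil : mup t (\det pencil) = k.
Proof.
have detS : \det S != 0 by rewrite -unitfE -unitmxE row_ebase_unit.
have detS2 : (\det S)%:P ^+ 2 != 0 by rewrite expf_neq0 // polyC_eq0.
have det_pencilE :
    \det pencil = ('X - t%:P) ^+ k * (\det core_pencil * ((\det S) ^- 2)%:P).
  apply: (mulfI detS2); rewrite det_pencil_factor mulrCA; congr (_ * _).
  by rewrite mulrCA -rmorphXn /= -polyCM divff ?polyC1 ?mulr1 // expf_neq0.
rewrite det_pencilE mupMl ?mup_XsubCX ?eqxx //.
rewrite /root hornerM hornerC mulf_eq0 negb_or horner_det_core_pencil det_core_neq0.
by rewrite invr_neq0 // expf_neq0.
Qed.

End Pencil.

Section SignedGraph.
Variables (R : realFieldType) (n : nat) (gamma : 'M[R]_n.+1).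
Hypothesis gamma_sym : forall i j, gamma i j = gamma j i.

Definition gamma_pos i j := if 0 < gamma i j then gamma i j else 0.
Definition gamma_neg i j := if 0 < gamma i j then 0 else gamma i j.
Definition gamma_poly i j : {poly R} :=
  if 0 < gamma i j then (gamma i j)%:P else gamma i j *: 'X.

Lemma laplacian_gamma_t t :
  laplacian (gamma_t gamma t) = laplacian gamma_pos + t *: laplacian gamma_neg.
Proof.
rewrite -laplacianZ -laplacianD; apply: eq_laplacian => i j.
by rewrite /gamma_t /gamma_pos /gamma_neg; case: ifP; rewrite ?mulr0 ?addr0 ?add0r.
Qed.

Lemma laplacian_gamma_poly t : laplacian gamma_poly =
  map_mx polyC (laplacian (gamma_t gamma t)) + ('X - t%:P) *: map_mx polyC (laplacian gamma_neg).
Proof.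
rewrite !map_laplacian -laplacianZ -laplacianD; apply: eq_laplacian => i j.
rewrite /gamma_poly /gamma_t /gamma_neg /=; case: ifP => _; first by rewrite mulr0 addr0.
by rewrite -mul_polyC polyCM; ring.
Qed.

Lemma M_Gamma_poly_minor0 :
  M_Gamma_poly gamma = (-1) ^+ n * \det (minor0 (laplacian gamma_poly)).
Proof.
have adj_sym : symmetric (sg_adj gamma) by move=> i j; rewrite /sg_adj gamma_sym.
have poly_sym i j : gamma_poly i j = gamma_poly j i by rewrite /gamma_poly gamma_sym.
have poly0 i j : ~~ sg_adj gamma i j -> gamma_poly i j = 0.
  by rewrite /sg_adj negbK /gamma_poly => /eqP ->; rewrite ltxx scale0r.
rewrite /M_Gamma_poly -/gamma_poly (tree_sum_arborescence adj_sym poly_sym poly0).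
by rewrite det_minor0_laplacian mulrA -expr2 sqrr_sign mul1r.
Qed.

(* [laplacian gamma_pos] and [- laplacian gamma_neg] are positive semidefinite,
   so both quadratic forms vanish once their combination and one of them do. *)
Lemma gamma_quad_eq0_const t (u : 'rV[R]_n.+1) :
  u *m laplacian (gamma_t gamma t) *m u^T = 0 -> u *m laplacian gamma_neg *m u^T = 0 ->
  forall i j, sg_adj gamma i j -> u 0 i = u 0 j.
Proof.
move=> quad_t quad_neg i j gij.
have quad_pos : u *m laplacian gamma_pos *m u^T = 0.
  move: quad_t; rewrite laplacian_gamma_t mulmxDr mulmxDl -scalemxAr -scalemxAl.
  by rewrite quad_neg scaler0 addr0.
have [pos_ij|neg_ij] := boolP (0 < gamma i j).
  apply: (laplacian_quad_eq0 _ _ quad_pos); rewrite /gamma_pos ?pos_ij ?lt0r_neq0 //.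
  - by move=> i' j'; rewrite gamma_sym.
  - by move=> i' j'; case: ifP => // /ltW.
apply: (laplacian_quad_eq0 (a := fun i j => - gamma_neg i j)).
- by move=> i' j'; rewrite /gamma_neg gamma_sym.
- move=> i' j'; rewrite /gamma_neg; case: ifP => [_|]; first by rewrite oppr0.
  by rewrite oppr_ge0 => /negbT; rewrite -leNgt.
- rewrite (_ : laplacian _ = (-1) *: laplacian gamma_neg).
    by rewrite -scalemxAr -scalemxAl quad_neg scaler0.
  by rewrite -laplacianZ; apply: eq_laplacian => i' j'; rewrite mulN1r.
- by rewrite /gamma_neg (negbTE neg_ij) oppr_eq0.
Qed.

Lemma minor0_gamma_definite t (v : 'rV[R]_n) : sg_connected gamma ->
  v *m minor0 (laplacian (gamma_t gamma t)) = 0 ->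
  v *m minor0 (laplacian gamma_neg) *m v^T = 0 -> v = 0.
Proof.
move=> conn v_ker v_neg; pose u := v *m root_embed.
have quadE A : u *m A *m u^T = v *m minor0 A *m v^T by rewrite minor0E trmx_mul !mulmxA.
have quad_t : u *m laplacian (gamma_t gamma t) *m u^T = 0 by rewrite quadE v_ker mul0mx.
have quad_neg : u *m laplacian gamma_neg *m u^T = 0 by rewrite quadE.
have u_const := gamma_quad_eq0_const quad_t quad_neg.
have u_root : u 0 ord0 = 0 by rewrite !mxE big1 // => i _; rewrite !mxE lift0_eq0 mulr0.
have u0 j : u 0 j = 0.
  have /connectP [p p_path ->] := conn ord0 j.
  elim: p ord0 p_path u_root => [|y p IH] x //= /andP [xy p_path] ux.
  by apply: IH p_path _; rewrite -(u_const _ _ xy).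
apply/rowP => j; rewrite mxE -(u0 (lift ord0 j)) mxE.
under eq_bigr => i _ do rewrite !mxE (inj_eq (@lift_inj _ ord0)) mulrC.
by rewrite sum_delta_r.
Qed.

End SignedGraph.

Theorem mainTheorem6 (R : realFieldType) (N : nat) (gamma : 'M[R]_N) (tstar : R) :
  (0 < N)%N -> signed_graph gamma -> sg_connected gamma ->
  ker_dim_on_ones_perp (laplacian (gamma_t gamma tstar))
  = mup tstar (M_Gamma_poly gamma).
Proof.
case: N gamma tstar => [//|n] gamma t _ [gamma_sym _] conn.
have L_sym : (laplacian (gamma_t gamma t))^T = laplacian (gamma_t gamma t).
  by apply: trmx_laplacian => i j; rewrite /gamma_t gamma_sym.
rewrite /ker_dim_on_ones_perp rank_ker_ones_perp ?pnatr_eq0 //; last exact: laplacian_row_sum.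
rewrite (M_Gamma_poly_minor0 gamma_sym) mupMr; last first.
  by rewrite /root horner_exp hornerN hornerC signr_eq0.
rewrite (laplacian_gamma_poly gamma t) linearD linearZ /= linearD linearZ /= -!map_col' -!map_row'.
rewrite mup_det_pencil // ?trmx_minor0 ?L_sym // => v.
exact: minor0_gamma_definite.
Qed.
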